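(* Let $z_1,\dots,z_{N+1}$ be distinct points on the unit circle and let $\Phi_0,\dots,\Phi_N$ be the monic orthogonal polynomials with respect to the measure $\frac{1}{N+1}\sum_{s=1}^{N+1}\delta_{z_s}$ (equal masses), with Verblunsky parameters $a_0,\dots,a_{N-1}$ ($|a_k|<1$), completed by $\Phi_{N+1}(z)=\prod_{s=1}^{N+1}(z-z_s)=z\Phi_N(z)-\overline{a_N}\Phi_N^*(z)$ with $|a_N|=1$. Let $\tilde\Phi_0,\dots,\tilde\Phi_{N+1}$ be the mirror-dual system, i.e. the monic polynomials generated by the Szegő recurrence from $\tilde a_n=-a_N\overline{a_{N-n-1}}$, $n=0,\dots,N$ (with $a_{-1}=-1$). Then $\tilde\Phi_{N+1}=\Phi_{N+1}$ and $$\tilde\Phi_N(z)=\frac{1}{N+1}\,\Phi_{N+1}'(z),$$ i.e. the mirror-dual system is the Sturmian POPUC system associated with $\Phi_{N+1}$; equivalently its orthogonality weights are proportional to $1/|\Phi_{N+1}'(z_s)|^2$.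
   Context: Szegő recurrence: $\Phi_0=1$, $\Phi_{n+1}(z)=z\Phi_n(z)-\overline{a_n}\Phi_n^*(z)$ with $\Phi_n^*(z)=z^n\overline{\Phi_n}(1/z)$ ($\overline{\Phi_n}$ = polynomial with conjugated coefficients); the $a_n$ are the Verblunsky parameters. A POPUC system $\Phi_0,\dots,\Phi_{N+1}$ (with $|a_k|<1$ for $k<N$, $|a_N|=1$) is called Sturmian if $\Phi_N=\Phi_{N+1}'/(N+1)$. *)

(* Complex numbers: any numClosedFieldType C (e.g. algC, R[i]). *)
From HB Require Import structures.
From mathcomp Require Import all_boot all_order all_algebra.
Set Implicit Arguments. Unset Strict Implicit. Unset Printing Implicit Defensive.
Import Order.TTheory GRing.Theory Num.Theory.
Local Open Scope ring_scope.

Section Szego.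
Variable C : numClosedFieldType.

(* Phi_n^*(z) = z^n * conj(Phi_n)(1/z): coefficient i is conj of coefficient n-i *)
Definition revstar (n : nat) (p : {poly C}) : {poly C} :=
  \poly_(i < n.+1) ((p`_(n - i))^*).

Fixpoint szego (a : nat -> C) (n : nat) : {poly C} :=
  match n with
  | 0 => 1
  | n'.+1 => 'X * szego a n' - (a n')^* *: revstar n' (szego a n')
  end.

Definition dinner (N : nat) (z : 'I_N.+1 -> C) (p q : {poly C}) : C :=
  (N.+1)%:R^-1 * \sum_(s < N.+1) p.[z s] * (q.[z s])^*.

(* mirror-dual parameters: ta_n = - a_N conj(a_{N-n-1}), n = 0..N, a_{-1} = -1
   (so ta_N = a_N). Values for n > N are irrelevant. *)
Definition mirror (a : nat -> C) (N : nat) (n : nat) : C :=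
  if (n < N)%N then - a N * (a (N - n.+1)%N)^* else - a N * (-1)^*.

End Szego.

(* The Szegő recurrence is encoded by 2x2 transfer matrices
   A(b) = [[X, -conj b], [-b X, 1]] over C[X]: with M_n = A(a_{n-1})...A(a_0),
   Phi_n = M_n(1,1) + M_n(1,2) and Phi_n^* = M_n(2,1) + M_n(2,2).
   Reversing and conjugating the parameters (the mirror map, with the unimodular
   last parameter u = a_N) transposes M_N up to the conjugation by
   D = diag(1, -u X).  This gives Phi~_{N+1} = Phi_{N+1} and expresses Phi~_N
   through the entries of M_N; together with det M_N = X^N prod (1 - |a_k|^2)
   it yields, at every zero z_s of Phi_{N+1} on the unit circle,
     conj(Phi_N(z_s)) * Phi~_N(z_s) = prod_{k<N} (1 - |a_k|^2).
   Orthogonality of Phi_N with respect to the equal-mass measure on the z_s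
   makes conj(Phi_N(z_s)) * Phi_{N+1}'(z_s) independent of s (a discrete
   Christoffel identity).  Hence Phi~_N and Phi_{N+1}' are proportional at all
   N+1 nodes, so proportional as polynomials of degree <= N, and comparing
   leading coefficients gives Phi~_N = Phi_{N+1}' / (N+1). *)

From HB Require Import structures.
From mathcomp Require Import all_boot all_order all_algebra.
From mathcomp Require Import ring zify.
Import Order.TTheory GRing.Theory Num.Theory.
Local Open Scope ring_scope.
Set Implicit Arguments. Unset Strict Implicit. Unset Printing Implicit Defensive.

Section TwoByTwo.
Variable R : comNzRingType.

Record mat := Mat { m11 : R; m12 : R; m21 : R; m22 : R }.

Definition mmul (A B : mat) : mat :=
  Mat (m11 A * m11 B + m12 A * m21 B) (m11 A * m12 B + m12 A * m22 B)
      (m21 A * m11 B + m22 A * m21 B) (m21 A * m12 B + m22 A * m22 B).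
Definition mtr (A : mat) : mat := Mat (m11 A) (m21 A) (m12 A) (m22 A).
Definition mdet (A : mat) : R := m11 A * m22 A - m12 A * m21 A.
Definition mid : mat := Mat 1 0 0 1.
Arguments mmul : simpl never.

Lemma mmulA A B D : mmul A (mmul B D) = mmul (mmul A B) D.
Proof. by case: A B D => ? ? ? ? [? ? ? ?] [? ? ? ?]; rewrite /mmul /=; congr Mat; ring. Qed.

Lemma mmul1l A : mmul mid A = A.
Proof. by case: A => ? ? ? ?; rewrite /mmul /=; congr Mat; ring. Qed.

Lemma mmul1r A : mmul A mid = A.
Proof. by case: A => ? ? ? ?; rewrite /mmul /=; congr Mat; ring. Qed.

Lemma mtrM A B : mtr (mmul A B) = mmul (mtr B) (mtr A).
Proof. by case: A B => ? ? ? ? [? ? ? ?]; rewrite /mmul /mtr /=; congr Mat; ring. Qed.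

Lemma mdetM A B : mdet (mmul A B) = mdet A * mdet B.
Proof. by case: A B => ? ? ? ? [? ? ? ?]; rewrite /mdet /=; ring. Qed.

Fixpoint mprod (F : nat -> mat) (n : nat) : mat :=
  if n is n'.+1 then mmul (F n') (mprod F n') else mid.

Lemma mprodSr F n : mprod F n.+1 = mmul (mprod (fun k => F k.+1) n) (F 0%N).
Proof.
elim: n F => [|n IH] F; first by rewrite /= mmul1l mmul1r.
by rewrite -[mprod F n.+2]/(mmul (F n.+1) (mprod F n.+1)) IH mmulA.
Qed.

Lemma eq_mprod F G n : (forall k, (k < n)%N -> F k = G k) -> mprod F n = mprod G n.
Proof.
elim: n => [//|n IH] FG /=; rewrite FG // IH // => k lt_kn.
by apply: FG; apply: ltnW.
Qed.

Lemma mdet_mprod F n : mdet (mprod F n) = \prod_(k < n) mdet (F k).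
Proof.
elim: n => [|n IH]; first by rewrite big_ord0 /mdet /=; ring.
by rewrite /= mdetM IH big_ord_recr mulrC.
Qed.

End TwoByTwo.

Section Transfer.
Variable C : numClosedFieldType.
Local Notation P := {poly C}.

Definition Amat (b : C) : mat P := Mat 'X (- (b^*)%:P) (- b%:P * 'X) 1.
Definition transfer (b : nat -> C) (n : nat) : mat P := mprod (fun k => Amat (b k)) n.

Lemma mdet_transfer b n :
  mdet (transfer b n) = 'X^n * (\prod_(k < n) (1 - b k * (b k)^*))%:P.
Proof.
have mdetA k : mdet (Amat (b k)) = 'X * (1 - b k * (b k)^*)%:P.
  by rewrite /mdet /= polyCB polyCM; ring.
rewrite mdet_mprod; under eq_bigr => k _ do rewrite mdetA.
by rewrite big_split /= prodr_const card_ord rmorph_prod.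
Qed.

(* the diagonal matrix conjugating the mirror system to the transposed one *)
Definition mdiag (u : C) : mat P := Mat 1 0 0 (- u%:P * 'X).

Lemma mirror_step u b : u * u^* = 1 ->
  mmul (Amat (- u * b^*)) (mdiag u) = mmul (mdiag u) (mtr (Amat b)).
Proof.
move=> hu; have hU : u%:P * (u^*)%:P = 1 :> P by rewrite -polyCM hu.
rewrite /mmul /= rmorphM rmorphN /= conjCK !polyCM !polyCN.
congr Mat; try ring.
by transitivity (u%:P * (u^*)%:P * (- b%:P * 'X)); [ring | rewrite hU; ring].
Qed.

Lemma mirror_transfer u b m : u * u^* = 1 ->
  mmul (transfer (fun n => - u * (b (m - n.+1)%N)^*) m) (mdiag u) =
  mmul (mdiag u) (mtr (transfer b m)).
Proof.
move=> hu; elim: m => [|m IH]; first by rewrite /transfer /= mmul1l mmul1r.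
rewrite /transfer mprodSr subn1 -mmulA mirror_step // mmulA.
rewrite [mprod _ m](_ : _ = transfer (fun n => - u * (b (m - n.+1)%N)^*) m) //.
by rewrite IH -mmulA -mtrM.
Qed.

End Transfer.

Lemma unimodular_conj (C : numClosedFieldType) (w : C) : `|w| = 1 -> w * w^* = 1.
Proof. by move=> w1; rewrite -normCK w1 expr1n. Qed.

Section Star.
Variable C : numClosedFieldType.
Local Notation P := {poly C}.

Lemma revstar_coef n (p : P) i :
  (revstar n p)`_i = if (i <= n)%N then (p`_(n - i))^* else 0.
Proof. by rewrite /revstar coef_poly ltnS. Qed.

Lemma revstarB n (p q : P) c : revstar n (p - c *: q) = revstar n p - c^* *: revstar n q.
Proof.
apply/polyP => i; rewrite coefB coefZ !revstar_coef coefB coefZ.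
by case: ifP => _; rewrite ?mulr0 ?subr0 // rmorphB rmorphM.
Qed.

Lemma revstarXM n (p : P) : revstar n.+1 ('X * p) = revstar n p.
Proof.
apply/polyP => i; rewrite !revstar_coef coefXM.
have [le_in|lt_ni] := leqP i n.
  rewrite (leqW le_in) subSn //=.
have [le_in1|//] := leqP i n.+1.
by rewrite (_ : n.+1 - i = 0)%N ?rmorph0 //; lia.
Qed.

Lemma revstarK n (p : P) : (size p <= n.+1)%N -> revstar n.+1 (revstar n p) = 'X * p.
Proof.
move=> size_p; apply/polyP => i; rewrite !revstar_coef coefXM.
case: i => [|i] /=; first by rewrite subn0 ltnn rmorph0.
have [le_in|lt_ni] := leqP i n.
  by rewrite ltnS le_in subSS leq_subr conjCK subKn.
by rewrite ltnS leqNgt lt_ni /= nth_default //; apply: leq_trans size_p _.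
Qed.

Lemma size_szego (b : nat -> C) n : (size (szego b n) <= n.+1)%N.
Proof.
elim: n => [|n IH]; first by rewrite size_poly1.
apply/leq_sizeP => j le_n2j; rewrite /= coefB coefXM coefZ revstar_coef.
rewrite (_ : (j <= n)%N = false) ?mulr0 ?subr0; last by lia.
case: j le_n2j => [//|j] le_n1j /=; exact: nth_default (leq_trans IH le_n1j).
Qed.

Lemma size_deriv_szego (b : nat -> C) n : (size (szego b n)^`() <= n)%N.
Proof. by have := size_szego b n; rewrite /deriv => ?; apply: leq_trans (size_poly _ _) _; lia. Qed.

Lemma coef_szego_top (b : nat -> C) n : (szego b n)`_n = 1.
Proof.
elim: n => [|n IH]; first by rewrite coef1.
by rewrite /= coefB coefXM IH coefZ revstar_coef ltnn mulr0 subr0.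
Qed.

Lemma szego_transfer (b : nat -> C) n :
  szego b n = m11 (transfer b n) + m12 (transfer b n) /\
  revstar n (szego b n) = m21 (transfer b n) + m22 (transfer b n).
Proof.
elim: n => [|n [IH1 IH2]].
  split; first by rewrite /= addr0.
  apply/polyP => -[|i]; rewrite revstar_coef /= add0r coef1 //.
  by rewrite rmorph1.
rewrite [szego b n.+1]/= revstarB revstarXM revstarK ?size_szego // conjCK.
by rewrite IH2 IH1 /transfer /= /mmul /= -!mul_polyC; split; ring.
Qed.

Lemma revstar_eval n (p : P) w : `|w| = 1 -> (size p <= n.+1)%N ->
  (revstar n p).[w] = w ^+ n * (p.[w])^*.
Proof.
move=> w1 size_p.
rewrite /revstar horner_poly (horner_coef_wide w size_p) rmorph_sum mulr_sumr.
rewrite (reindex_inj rev_ord_inj); apply: eq_bigr => i _ /=.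
have lt_in := ltn_ord i.
rewrite (_ : n - (n.+1 - i.+1) = i)%N; last by lia.
rewrite (_ : w ^+ n = w ^+ (n.+1 - i.+1) * w ^+ i); last by rewrite -exprD; congr (_ ^+ _); lia.
by rewrite rmorphM rmorphXn mulrCA -mulrA -exprMn unimodular_conj // expr1n mulr1 mulrC.
Qed.

End Star.

Section Nodes.
Variables (F : idomainType) (N : nat) (z : 'I_N.+1 -> F).
Hypothesis z_inj : injective z.

Let node_poly : {poly F} := \prod_(s < N.+1) ('X - (z s)%:P).

Lemma annihilate_poly (v : 'I_N.+1 -> F) n :
  (forall k, (k < n)%N -> \sum_s v s * z s ^+ k = 0) ->
  forall f : {poly F}, (size f <= n)%N -> \sum_s v s * f.[z s] = 0.
Proof.
move=> v_mono f size_f.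
under eq_bigr => s _ do rewrite (horner_coef_wide _ size_f) mulr_sumr.
rewrite exchange_big big1 // => i _ /=.
under eq_bigr => s _ do rewrite mulrCA.
by rewrite -mulr_sumr v_mono ?mulr0.
Qed.

Lemma christoffel_const (v : 'I_N.+1 -> F) :
  (forall f : {poly F}, (size f <= N)%N -> \sum_s v s * f.[z s] = 0) ->
  forall s t, v s * node_poly^`().[z s] = v t * node_poly^`().[z t].
Proof.
move=> v_ann s t; have [-> //|neq_st] := eqVneq s t.
pose f := \prod_(r | (r != s) && (r != t)) ('X - (z r)%:P).
have node_st : node_poly = ('X - (z s)%:P) * (('X - (z t)%:P) * f).
  by rewrite /node_poly (bigD1 s) //= (bigD1 t) //= eq_sym.
have node_ts : node_poly = ('X - (z t)%:P) * (('X - (z s)%:P) * f).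
  by rewrite node_st mulrCA.
have size_f : (size f <= N)%N.
  have : size node_poly = N.+2 by rewrite /node_poly -big_enum size_prod_XsubC size_enum_ord.
  have f_neq0 : f != 0 by rewrite monic_neq0 ?monic_prod_XsubC.
  rewrite node_st size_monicM ?monicXsubC ?mulf_neq0 ?polyXsubC_eq0 //.
  rewrite size_monicM ?monicXsubC //.
  by rewrite !size_XsubC !add2n /= => -[->].
have f_st : v s * f.[z s] + v t * f.[z t] = 0.
  rewrite -(v_ann f size_f) (bigD1 s) //= (bigD1 t) //= 1?eq_sym // addrA.
  rewrite big1 ?addr0 // => r /andP [neq_rs neq_rt].
  by rewrite /f (bigD1 r) /= ?neq_rs ?neq_rt // hornerM hornerXsubC subrr !mul0r mulr0.
have deriv_at (x y : 'I_N.+1) : node_poly = ('X - (z x)%:P) * (('X - (z y)%:P) * f) ->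
    node_poly^`().[z x] = (z x - z y) * f.[z x].
  move=> ->; rewrite derivM derivXsubC hornerD !hornerM !hornerXsubC subrr.
  by rewrite mul0r addr0 hornerC mul1r.
rewrite (deriv_at _ _ node_st) (deriv_at _ _ node_ts).
by transitivity ((z s - z t) * (v s * f.[z s] + v t * f.[z t]) + v t * ((z t - z s) * f.[z t]));
  [ring | rewrite f_st; ring].
Qed.

Lemma poly_eq_at_nodes (p q : {poly F}) :
  (size p <= N.+1)%N -> (size q <= N.+1)%N ->
  (forall s, p.[z s] = q.[z s]) -> p = q.
Proof.
move=> size_p size_q pq; apply/eqP; rewrite -subr_eq0; apply/eqP.
apply: (@roots_geq_poly_eq0 _ _ [seq z s | s <- enum 'I_N.+1]).
- by apply/allP => _ /mapP [s _ ->]; rewrite /root hornerD hornerN pq subrr.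
- by rewrite map_inj_uniq // enum_uniq.
- by rewrite size_map size_enum_ord (leq_trans (size_polyD _ _)) // geq_max size_polyN size_p.
Qed.

End Nodes.

Lemma ortho_annihilate (C : numClosedFieldType) N (z : 'I_N.+1 -> C) (p : {poly C}) n :
  (forall k, (k < n)%N -> dinner z p 'X^k = 0) ->
  forall f : {poly C}, (size f <= n)%N -> \sum_s (p.[z s])^* * f.[z s] = 0.
Proof.
move=> p_ortho; apply: annihilate_poly => k lt_kn.
have := p_ortho k lt_kn; rewrite /dinner => /eqP.
rewrite mulf_eq0 invr_eq0 pnatr_eq0 /= => /eqP /(congr1 (fun x => x^*)).
rewrite rmorph_sum rmorph0 => sum_conj; rewrite -[RHS]sum_conj; apply: eq_bigr => s _.
by rewrite rmorphM /= hornerXn conjCK.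
Qed.

Lemma deriv_proportional (F : numFieldType) N (p q : {poly F}) (c r : F) :
  r != 0 -> p`_N = 1 -> q`_N.+1 = 1 -> c *: p = r *: q^`() ->
  p = (N.+1)%:R^-1 *: q^`().
Proof.
move=> r_neq0 p_top q_top cp_rq.
have c_val : c = r * (N.+1)%:R.
  have := congr1 (fun s : {poly F} => s`_N) cp_rq.
  by rewrite /= !coefZ coef_deriv p_top q_top mulr1 mulr_natr.
have n1_neq0 : (N.+1)%:R != 0 :> F by rewrite pnatr_eq0.
apply: (scalerI (mulf_neq0 r_neq0 n1_neq0)).
by rewrite scalerA mulfK // -c_val cp_rq.
Qed.

Lemma szego_prod_neq0 (C : numClosedFieldType) (a : nat -> C) N :
  (forall k, (k < N)%N -> `|a k| < 1) -> \prod_(k < N) (1 - a k * (a k)^*) != 0.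
Proof.
move=> a_lt1; apply/prodf_neq0 => k _; rewrite subr_eq0 eq_sym -normCK.
by rewrite lt_eqF // expr_lt1 // a_lt1.
Qed.

Section Mirror.
Variables (C : numClosedFieldType) (a : nat -> C) (N : nat).
Hypothesis a_N_unimodular : `|a N| = 1.

Let u := a N.
Let M := transfer a N.
Let Mt := transfer (mirror a N) N.

Let uu : u * u^* = 1. Proof. exact: unimodular_conj. Qed.
Let uU : (u^*)%:P * u%:P = 1 :> {poly C}. Proof. by rewrite -polyCM mulrC uu. Qed.

Lemma mirror_entries :
  [/\ m11 Mt = m11 M, m22 Mt = m22 M, 'X * m12 Mt = - (u^*)%:P * m21 M
    & (u^*)%:P * m21 Mt = - 'X * m12 M].
Proof.
have Mt_rev : Mt = transfer (fun n => - u * (a (N - n.+1)%N)^*) N.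
  by apply: eq_mprod => n lt_nN; rewrite /mirror lt_nN.
have d_neq0 : - u%:P * 'X != 0 :> {poly C}.
  by rewrite mulf_neq0 ?polyX_eq0 // oppr_eq0 polyC_eq0 -normr_eq0 a_N_unimodular oner_eq0.
have := mirror_transfer a N uu; rewrite -Mt_rev /mmul /mdiag /mtr /=.
rewrite !(mulr0, mul0r, mulr1, mul1r, addr0, add0r) => -[e11 e12 e21 e22].
split=> //.
- by apply: (mulIf d_neq0); rewrite e22 mulrC.
- transitivity ((u^*)%:P * u%:P * ('X * m12 Mt)); first by rewrite uU mul1r.
  by rewrite -e12; ring.
- by rewrite e21; transitivity (- ((u^*)%:P * u%:P) * ('X * m12 M)); [ring | rewrite uU; ring].
Qed.

Lemma mirror_szego_last : szego (mirror a N) N.+1 = szego a N.+1.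
Proof.
have [e11 e22 e12 e21] := mirror_entries.
have [Phi_M Phis_M] := szego_transfer a N.
have [Phi_Mt Phis_Mt] := szego_transfer (mirror a N) N.
have mirror_N : mirror a N N = u by rewrite /mirror ltnn rmorphN1 mulrN1 opprK.
rewrite /= mirror_N Phis_Mt Phi_Mt Phis_M Phi_M -/M -/Mt -!mul_polyC -/u.
transitivity ('X * m11 Mt + 'X * m12 Mt - (u^*)%:P * m21 Mt - (u^*)%:P * m22 Mt); first by ring.
by rewrite e11 e22 e12 e21; ring.
Qed.

Lemma mirror_node (w : C) : `|w| = 1 -> root (szego a N.+1) w ->
  ((szego a N).[w])^* * (szego (mirror a N) N).[w] =
  \prod_(k < N) (1 - a k * (a k)^*).
Proof.
move=> w1 /rootP Pw0.
have [e11 _ e12 _] := mirror_entries.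
have [Phi_M Phis_M] := szego_transfer a N.
have [Phi_Mt _] := szego_transfer (mirror a N) N.
have w_neq0 : w != 0 by rewrite -normr_eq0 w1 oner_eq0.
have XPhit : 'X * szego (mirror a N) N = 'X * m11 M - (u^*)%:P * m21 M.
  by rewrite Phi_Mt mulrDr e12 e11; ring.
set rho := \prod_(k < N) _.
set phi := (szego a N).[w]; set phit := (szego (mirror a N) N).[w].
set E11 := (m11 M).[w]; set E12 := (m12 M).[w].
set E21 := (m21 M).[w]; set E22 := (m22 M).[w].
have star_E : w ^+ N * phi^* = E21 + E22.
  by rewrite -revstar_eval ?size_szego // Phis_M hornerD.
have rec_w : u^* * (E21 + E22) = w * (E11 + E12).
  move: Pw0; rewrite [szego a N.+1]/= hornerD hornerN hornerZ hornerM hornerX.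
  by rewrite Phis_M Phi_M !hornerD => /subr0_eq.
have Xphit_w : w * phit = w * E11 - u^* * E21.
  by have := congr1 (horner^~ w) XPhit; rewrite /= !(hornerM, hornerD, hornerN, hornerX, hornerC).
have det_w : E11 * E22 - E12 * E21 = w ^+ N * rho.
  by have := congr1 (horner^~ w) (mdet_transfer a N); rewrite /= hornerM hornerXn hornerC hornerD hornerN !hornerM.
apply: (mulfI (mulf_neq0 (expf_neq0 N w_neq0) w_neq0)).
transitivity ((w ^+ N * phi^*) * (w * phit)); first by ring.
rewrite star_E Xphit_w.
transitivity (w * E11 * (E21 + E22) - E21 * (u^* * (E21 + E22))); first by ring.
by rewrite rec_w; transitivity (w * (E11 * E22 - E12 * E21)); [ring | rewrite det_w; ring].
Qed.

End Mirror.

Unset Implicit Arguments.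

Theorem corollary1 (C : numClosedFieldType) (N : nat) (z : 'I_N.+1 -> C)
    (a : nat -> C)
    (hz_circ : forall s, `|z s| = 1)
    (hz_dist : injective z)
    (hortho : forall n k : nat, (n <= N)%N -> (k < n)%N ->
        dinner z (szego a n) ('X^k) = 0)
    (ha_lt : forall k : nat, (k < N)%N -> `|a k| < 1)
    (ha_N : `|a N| = 1)
    (hlast : szego a N.+1 = \prod_(s < N.+1) ('X - (z s)%:P)) :
  szego (mirror a N) N.+1 = szego a N.+1 /\
  szego (mirror a N) N = (N.+1)%:R^-1 *: (szego a N.+1)^`().
Proof.
split; first exact: mirror_szego_last.
set P := szego a N.+1 in hlast *; set T := szego (mirror a N) N.
pose v s := ((szego a N).[z s])^*.
pose rho := \prod_(k < N) (1 - a k * (a k)^*).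
have v_ann := ortho_annihilate (fun k => hortho N k (leqnn N)).
have v_P' := christoffel_const v_ann; rewrite -hlast in v_P'.
have vT s : v s * T.[z s] = rho.
  apply: (mirror_node ha_N (hz_circ s)).
  by rewrite -/P hlast /root (bigD1 s) //= hornerM hornerXsubC subrr mul0r.
pose c := v ord0 * P^`().[z ord0].
have cT : c *: T = rho *: P^`().
  apply: (poly_eq_at_nodes hz_dist) => [||s].
  - by rewrite (leq_trans (size_scale_leq _ _)) ?size_szego.
  - by rewrite (leq_trans (size_scale_leq _ _)) ?size_deriv_szego.
  by rewrite !hornerZ /c (v_P' ord0 s) -(vT s); ring.
apply: (deriv_proportional (szego_prod_neq0 ha_lt) _ _ cT); exact: coef_szego_top.
Qed.
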